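(* Let $d\geq 1$ and $\delta\in\{1,2,3\}$. Every $d$-dimensional cube packing with $2^d-\delta$ cubes can be extended to a cube tiling, i.e. there is a $d$-dimensional cube tiling containing all cubes of the packing.
   Context: A $d$-dimensional cube packing is a $4\mathbb{Z}^d$-invariant set of pairwise disjoint translates $z+[0,2[^d$ with $z\in\mathbb{Z}^d$; equivalently a set of representatives $x\in\{0,1,2,3\}^d$ of the $4\mathbb{Z}^d$-orbits of its cubes, two representatives $x,x'$ giving disjoint cubes iff $|x_i-x'_i|=2$ for some coordinate $i$. Its number of cubes is the number of orbits. A cube tiling is a cube packing whose cubes cover $\mathbb{R}^d$ (equivalently, one with $2^d$ cubes). *)

From mathcomp Require Import all_boot.
Set Implicit Arguments. Unset Strict Implicit. Unset Printing Implicit Defensive.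

(* A cube z + [0,2[^d (z in Z^d), up to translation by 4Z^d, is represented by
   its representative x in {0,1,2,3}^d. *)
Definition rep (d : nat) := {ffun 'I_d -> 'I_4}.

(* Cubes with representatives x, x' are disjoint iff |x_i - x'_i| = 2 for some i. *)
Definition cubes_disjoint (d : nat) (x x' : rep d) : bool :=
  [exists i : 'I_d, (x i + 2 == x' i :> nat) || (x' i + 2 == x i :> nat)].

(* A cube packing: a set of representatives (= set of 4Z^d-orbits of cubes)
   whose cubes are pairwise disjoint.  Its number of cubes is #|P|. *)
Definition cube_packing (d : nat) (P : {set rep d}) : Prop :=
  forall x x', x \in P -> x' \in P -> x != x' -> cubes_disjoint x x'.

Definition cube_contains (d : nat) (x y : rep d) : bool :=
  [forall i : 'I_d, (y i + 4 - x i) %% 4 <= 1].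

(* Since all cubes have
   integer corners, covering R^d is equivalent to covering every integer point,
   and by 4Z^d-invariance it suffices to consider y in {0,1,2,3}^d. *)
Definition cube_tiling (d : nat) (T : {set rep d}) : Prop :=
  cube_packing T /\ forall y : rep d, exists2 x, x \in T & cube_contains x y.

From mathcomp Require Import all_boot ssralg zmodp zify.
Set Implicit Arguments. Unset Strict Implicit. Unset Printing Implicit Defensive.
Import GRing.Theory.

(* Work in the torus (Z/4)^d, where a cube is a product of segments {a, a+1},
   and call a point a hole of a packing P if no cube of P contains it.  A
   slice (a coordinate subtorus of dimension |S|) has 4^|S| points and every
   cube of P meeting it covers 2^|S| of them, so if P meets the slice in
   2^|S| - k cubes, the slice contains k 2^|S| holes.  By induction on |S|, if
   1 <= k <= 3 some cube of the slice consists of holes only; for the whole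
   torus this cube can be added to P, and repeating this yields a tiling.
   For the induction step cut the slice into the four layers y_i = t.  Each
   cube meets exactly one of the layers t and t + 2, so the layer deficiencies
   satisfy k_t + k_(t+2) = k: either a full layer lies next to a layer with
   1 <= k_t <= 3, or two adjacent layers have k_t = 1.  The free cube that
   induction provides in such a layer is then moved or extended across the
   neighbouring layers, using that a hole never has both of its neighbours on
   a coordinate line covered: the two covering cubes would overlap two steps
   away from it. *)

Definition seg (a b : 'I_4) : bool := (b + 4 - a) %% 4 <= 1.

Definition opposite (a b : 'I_4) : bool := (a + 2 == b :> nat) || (b + 2 == a :> nat).

Lemma segE a b : seg a b = (b == a) || (b == a + 1)%R.
Proof. by case: a b => [[|[|[|[|//]]]] ?] [[|[|[|[|//]]]] ?]. Qed.

Lemma seg_refl a : seg a a.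
Proof. by rewrite segE eqxx. Qed.

Lemma seg_succ a : seg a (a + 1)%R.
Proof. by rewrite segE eqxx orbT. Qed.

Lemma card_seg a : #|seg a| = 2.
Proof.
rewrite (@eq_card _ _ [set a; (a + 1)%R]) => [|b]; last by rewrite !inE -topredE /= segE.
by rewrite cards2; case: a => [[|[|[|[|//]]]] ?].
Qed.

Lemma seg_add2 a b : seg a (b + 2)%R = ~~ seg a b.
Proof. by case: a b => [[|[|[|[|//]]]] ?] [[|[|[|[|//]]]] ?]; rewrite /seg /=. Qed.

Lemma seg_opposite a b c : opposite a b -> seg a c -> seg b c -> False.
Proof.
by case: a b c => [[|[|[|[|//]]]] ?] [[|[|[|[|//]]]] ?] [[|[|[|[|//]]]] ?]; rewrite /seg /=.
Qed.

Lemma seg_meet a b : ~~ opposite a b -> exists c, seg a c && seg b c.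
Proof.
move=> opp; exists (if seg a b then b else a); move: opp.
by case: a b => [[|[|[|[|//]]]] ?] [[|[|[|[|//]]]] ?]; rewrite /seg /=.
Qed.

Lemma seg_across a c (e : 'I_4) :
  odd e -> ~~ seg a c -> seg a (c + e)%R || seg a (c - e)%R -> seg a (c + 2)%R.
Proof.
by case: a c e => [[|[|[|[|//]]]] ?] [[|[|[|[|//]]]] ?] [[|[|[|[|//]]]] ?]; rewrite /seg /=.
Qed.

Lemma seg_odd_neighbours a c (e : 'I_4) : odd e -> seg a (c - e)%R -> ~~ seg a (c + e)%R.
Proof.
by case: a c e => [[|[|[|[|//]]]] ?] [[|[|[|[|//]]]] ?] [[|[|[|[|//]]]] ?]; rewrite /seg /=.
Qed.

Lemma seg_separating_point a a' c w : a != a' -> seg a c -> seg a' c -> seg w c ->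
  exists2 v, seg w v & seg a v != seg a' v.
Proof.
have separate (b b' u : 'I_4) : b != b' -> seg b u -> seg b' u ->
    (seg b (u - 1)%R != seg b' (u - 1)%R) && (seg b (u + 1)%R != seg b' (u + 1)%R).
  by case: b b' u => [[|[|[|[|//]]]] ?] [[|[|[|[|//]]]] ?] [[|[|[|[|//]]]] ?];
    rewrite /seg /=.
have neighbour (b u : 'I_4) : seg b u -> seg b (u - 1)%R || seg b (u + 1)%R.
  by case: b u => [[|[|[|[|//]]]] ?] [[|[|[|[|//]]]] ?]; rewrite /seg /=.
move=> aa' ac a'c /neighbour/orP[wv|wv]; have /andP[? ?] := separate _ _ _ aa' ac a'c.
- by exists (c - 1)%R.
- by exists (c + 1)%R.
Qed.

Lemma odd_I4P (e : 'I_4) : odd e -> e = 1%R \/ e = (-1)%R.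
Proof. by case: e => [[|[|[|[|//]]]] ?] // _; [left | right]; apply: val_inj. Qed.

Lemma add_odd_I4 (e : 'I_4) : odd e -> (e + e = 2)%R.
Proof. by case: e => [[|[|[|[|//]]]] ?] // _; apply: val_inj. Qed.

Lemma layer_count_cases M m (N : 'I_4 -> nat) :
  (forall t, N t <= M) -> (forall t, N t + N (t + 2)%R = m) -> m < 2 * M <= m + 3 ->
  (exists t (e : 'I_4), [/\ odd e, N t = M & N (t + e)%R < M <= N (t + e)%R + 3]) \/
  (exists t, N t + 1 = M /\ N (t + 1)%R + 1 = M).
Proof.
move=> le sum /andP[lo hi].
case: (boolP [exists t, N t == M]) => [/existsP[t /eqP full]|/existsPn notfull].
  left; have := sum t; have := sum (t + 1)%R; rewrite -addrA.
  have := le (t + 1)%R; have := le (t + (1 + 2))%R.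
  (* [set] makes [lia] treat the differently elaborated copies of these terms
     as the same atoms. *)
  set n1 := N (t + 1)%R; set n3 := N (t + (1 + 2))%R.
  by case: (ltnP n1 M) => ?; [exists t, 1%R | exists t, (1 + 2)%R];
    split=> //; apply/andP; split; lia.
right; have lt t : N t < M by rewrite ltn_neqAle notfull le.
have [t deft] : exists t, N t + 1 = M.
  have := lt 0%R; have := lt 2%R; have := sum 0%R; rewrite add0r.
  by case: (eqVneq (N 0%R + 1) M) => ?; [exists 0%R | exists 2%R; lia].
have := sum (t + 1)%R; have := lt (t + 1)%R; have := lt (t + 1 + 2)%R.
case: (eqVneq (N (t + 1)%R + 1) M) => ?; first by exists t.
exists (t + 1 + 2)%R.
have -> : (t + 1 + 2 + 1 = t)%R.
  by rewrite -!addrA [X in (t + X)%R](_ : _ = 0%R) ?addr0 //; apply: val_inj.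
set n1 := N (t + 1)%R; set n3 := N (t + 1 + 2)%R.
lia.
Qed.

Section Cubes.

Variable d : nat.
Implicit Types (a x y z p : rep d) (P A : {set rep d}) (S : {set 'I_d}) (t u v e : 'I_4).

Definition upd y i v : rep d := [ffun k => if k == i then v else y k].

Lemma upd_same y i v : upd y i v i = v.
Proof. by rewrite ffunE eqxx. Qed.

Lemma upd_other y i v k : k != i -> upd y i v k = y k.
Proof. by rewrite ffunE => /negbTE ->. Qed.

Lemma upd_upd y i u v : upd (upd y i u) i v = upd y i v.
Proof. by apply/ffunP => k; rewrite !ffunE; case: eqP. Qed.

Lemma upd_id y i : upd y i (y i) = y.
Proof. by apply/ffunP => k; rewrite ffunE; case: eqP => [->|]. Qed.

Definition cube x : {set rep d} := [set y : rep d | [forall k, seg (x k) (y k)]].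

Definition holes P : {set rep d} := ~: \bigcup_(x in P) cube x.

Definition slice S a : {set rep d} := [set y : rep d | [forall k in ~: S, y k == a k]].

Definition layer A i t : {set rep d} := [set y in A | y i == t].

Definition cubes_meeting P A : {set rep d} := [set x in P | cube x :&: A != set0].

Definition free_in P A x : bool := cube x :&: A \subset holes P.

Lemma in_cubeP x y : reflect (forall k, seg (x k) (y k)) (y \in cube x).
Proof. by rewrite inE; apply: forallP. Qed.

Lemma cube_refl x : x \in cube x.
Proof. by apply/in_cubeP => k; apply: seg_refl. Qed.

Lemma in_cube_upd x y i v : y \in cube x -> (upd y i v \in cube x) = seg (x i) v.
Proof.
move=> /in_cubeP yx; apply/in_cubeP/idP => [/(_ i)|xv k]; first by rewrite upd_same.
by rewrite ffunE; case: eqP => [->|].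
Qed.

Lemma upd_in_cube x y i u v : y \in cube (upd x i u) -> seg (x i) v -> upd y i v \in cube x.
Proof.
move=> /in_cubeP yx xv; apply/in_cubeP => k; rewrite ffunE; case: eqP => [->//|/eqP ki].
by have := yx k; rewrite upd_other.
Qed.

Lemma not_holesP P y : reflect (exists2 x, x \in P & y \in cube x) (y \notin holes P).
Proof. by rewrite inE negbK; apply: bigcupP. Qed.

Lemma holes_uncovered P x y : y \in holes P -> x \in P -> y \in cube x -> False.
Proof.
move=> yh xP yx; suff: y \notin holes P by rewrite yh.
by apply/not_holesP; exists x.
Qed.

Lemma cubes_disjointE x w : cubes_disjoint x w = [disjoint cube x & cube w].
Proof.
rewrite -setI_eq0; apply/idP/idP.
  case/existsP => i opp; apply/eqP/setP => y; rewrite !inE.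
  by apply/negP => /andP[/forallP xy /forallP wy]; apply: seg_opposite opp (xy i) (wy i).
move=> /eqP cap0; apply: contraT; rewrite negb_exists => /forallP nopp.
have /fin_all_exists[c cP] k : exists c, seg (x k) c && seg (w k) c by apply/seg_meet/nopp.
have : [ffun k => c k] \in cube x :&: cube w.
  by rewrite inE; apply/andP; split; apply/in_cubeP => k; rewrite ffunE; case/andP: (cP k).
by rewrite cap0 inE.
Qed.

Lemma packing_cube_uniq P x x' y : cube_packing P -> x \in P -> x' \in P ->
  y \in cube x -> y \in cube x' -> x = x'.
Proof.
move=> HP xP x'P yx yx'; apply/eqP; apply: contraT => neq.
by have := HP x x' xP x'P neq; rewrite cubes_disjointE => /disjointFr/(_ yx); rewrite yx'.
Qed.

Lemma slice_upd S a y i v : i \in S -> y \in slice S a -> upd y i v \in slice S a.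
Proof.
rewrite !inE => iS /forall_inP ya; apply/forall_inP => k kS; rewrite upd_other ?ya //.
by apply: contraTneq kS => ->; rewrite inE iS.
Qed.

Lemma slice_layer S a i t : i \in S -> layer (slice S a) i t = slice (S :\ i) (upd a i t).
Proof.
move=> iS; apply/setP => y; rewrite !inE.
apply/andP/forall_inP => [[/forall_inP ya /eqP yi] k|ya].
  rewrite !inE negb_and negbK; case: (eqVneq k i) => [->|ki] /= kS.
    by rewrite upd_same yi.
  by rewrite upd_other // ya // inE.
split; last by have := ya i; rewrite !inE upd_same eqxx; apply.
apply/forall_inP => k kS; have ki : k != i by apply: contraTneq kS => ->; rewrite inE iS.
by have := ya k; rewrite !inE ki upd_other //; apply; rewrite inE in kS.
Qed.

Lemma sliceT a : slice setT a = setT.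
Proof. by apply/setP => y; rewrite !inE; apply/forall_inP => k; rewrite !inE. Qed.

Lemma slice0 a : slice set0 a = [set a].
Proof.
apply/setP => y; rewrite !inE; apply/forall_inP/eqP => [ya|-> k _ //].
by apply/ffunP => k; apply/eqP/ya; rewrite !inE.
Qed.

Lemma cubes_meetingT P : cubes_meeting P setT = P.
Proof.
apply/setP => x; rewrite inE andb_idr // => _.
by apply/set0Pn; exists x; rewrite setIT cube_refl.
Qed.

Lemma card_slice_box S a (G : 'I_d -> pred 'I_4) :
  #|[set y in slice S a | [forall k in S, y k \in G k]]| = \prod_(k in S) #|G k|.
Proof.
pose F k : pred 'I_4 := if k \in S then G k else pred1 (a k).
rewrite (@eq_card _ _ (family F)) => [|y].
  rewrite card_family foldrE big_map big_enum [RHS]big_mkcond /=.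
  by apply: eq_bigr => k _; rewrite /F; case: (k \in S); rewrite ?card1.
rewrite !inE; apply/andP/familyP => [[/forall_inP ya /forall_inP yG] k|yF].
  by rewrite /F; case: ifP => kS; [apply: yG | rewrite inE ya // inE kS].
split; apply/forall_inP => k kS; have := yF k; rewrite /F.
  by rewrite inE in kS; rewrite (negbTE kS) inE.
by rewrite kS.
Qed.

Lemma card_slice S a : #|slice S a| = 4 ^ #|S|.
Proof.
have -> : slice S a = [set y in slice S a | [forall k in S, y k \in predT]].
  by apply/setP => y; rewrite !inE andb_idr // => _; apply/forall_inP.
rewrite card_slice_box -prod_nat_const; apply: eq_bigr => k _; exact: card_ord.
Qed.

Lemma card_cube_slice S a x :
  cube x :&: slice S a != set0 -> #|cube x :&: slice S a| = 2 ^ #|S|.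
Proof.
case/set0Pn => y0 /setIP[/in_cubeP y0x]; rewrite inE => /forall_inP y0a.
have -> : cube x :&: slice S a = [set y in slice S a | [forall k in S, y k \in seg (x k)]].
  apply/setP => y; rewrite !inE andbC; case ya: [forall k in ~: S, _] => //=.
  apply/forallP/forall_inP => [yx k _|yx k]; first exact: yx.
  have [kS|kS] := boolP (k \in S); first exact: yx.
  move/forall_inP: ya => ya; rewrite (eqP (ya k _)) -?(eqP (y0a k _)) ?inE ?kS //.
rewrite (card_slice_box S a (fun k => seg (x k))) -prod_nat_const.
by apply: eq_bigr => k _; apply: card_seg.
Qed.

Lemma card_slice_covered P S a : cube_packing P ->
  #|slice S a :\: holes P| = #|cubes_meeting P (slice S a)| * 2 ^ #|S|.
Proof.
move=> HP; set A := slice S a; set C := cubes_meeting P A.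
pose F x := cube x :&: A.
have F_ne0 : set0 \notin F @: C.
  by apply/imsetP => -[x /setIdP[_ xA] /esym/eqP]; rewrite /F (negbTE xA).
have [trivF injF] : trivIset (F @: C) /\ {in C &, injective F}.
  apply: trivIimset F_ne0 => x x' /setIdP[xP _] /setIdP[x'P _] neq.
  apply: disjointW (subsetIl _ _) (subsetIl _ _) _.
  by rewrite -cubes_disjointE; apply: HP; rewrite // eq_sym.
rewrite -(card_in_imset injF); apply: card_uniform_partition.
  by move=> _ /imsetP[x /setIdP[_ xA] ->]; apply: card_cube_slice.
apply/and3P; split=> //; rewrite cover_imset; apply/eqP/setP => y; rewrite in_setD.
apply/bigcupP/andP => [[x /setIdP[xP _] /setIP[yx yA]]|[/not_holesP[x xP yx] yA]].
  by split=> //; apply/not_holesP; exists x.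
by exists x; rewrite inE ?xP ?yx ?yA //; apply/set0Pn; exists y; rewrite inE yx yA.
Qed.

Lemma card_slice_holes P S a : cube_packing P ->
  #|slice S a :&: holes P| + #|cubes_meeting P (slice S a)| * 2 ^ #|S| = 4 ^ #|S|.
Proof. by move=> HP; rewrite -card_slice_covered // cardsID card_slice. Qed.

Lemma card_cubes_meeting_le P S a : cube_packing P ->
  #|cubes_meeting P (slice S a)| <= 2 ^ #|S|.
Proof.
move=> /(card_slice_holes S a); rewrite -[4]/(2 * 2) expnMn => count.
by rewrite -(@leq_pmul2r (2 ^ #|S|)) ?expn_gt0 // -count leq_addl.
Qed.

Lemma slice_holes_full P S a : cube_packing P ->
  #|cubes_meeting P (slice S a)| = 2 ^ #|S| -> slice S a :&: holes P = set0.
Proof.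
move=> /(card_slice_holes S a) + full; rewrite full -[4]/(2 * 2) expnMn.
by rewrite -[RHS]add0n => /addIn /eqP; rewrite cards_eq0 => /eqP.
Qed.

Lemma slice_holes_deficient P S a x : cube_packing P ->
  #|cubes_meeting P (slice S a)| + 1 = 2 ^ #|S| ->
  x \in slice S a -> free_in P (slice S a) x ->
  slice S a :&: holes P = cube x :&: slice S a.
Proof.
move=> /(card_slice_holes S a) count deficient xA free; apply/esym/eqP.
rewrite eqEcard subsetI subsetIr -/(free_in P _ x) free /= card_cube_slice; last first.
  by apply/set0Pn; exists x; rewrite inE cube_refl.
move: count; rewrite -[4]/(2 * 2) expnMn -deficient mulnDl mul1n addnC.
by move=> /addnI ->.
Qed.

Lemma cube_meets_layer S a i t x : i \in S ->
  (cube x :&: layer (slice S a) i t != set0) =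
  (cube x :&: slice S a != set0) && seg (x i) t.
Proof.
move=> iS; apply/set0Pn/andP => [[y /setIP[yx /setIdP[ya /eqP <-]]]|].
  by split; [apply/set0Pn; exists y; rewrite inE yx | move/in_cubeP: yx].
case=> /set0Pn[y /setIP[yx ya]] xt; exists (upd y i t).
rewrite inE (in_cube_upd _ _ yx) xt /=.
by rewrite inE slice_upd // upd_same eqxx.
Qed.

Lemma card_cubes_meeting_layers P S a i t : i \in S ->
  #|cubes_meeting P (layer (slice S a) i t)| +
  #|cubes_meeting P (layer (slice S a) i (t + 2)%R)| = #|cubes_meeting P (slice S a)|.
Proof.
move=> iS; set C := cubes_meeting P (slice S a); set T := [set x : rep d | seg (x i) t].
have -> : cubes_meeting P (layer (slice S a) i t) = C :&: T.
  by apply/setP => x; rewrite !inE cube_meets_layer // andbA.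
have -> : cubes_meeting P (layer (slice S a) i (t + 2)%R) = C :\: T.
  by apply/setP => x; rewrite !inE cube_meets_layer // seg_add2 andbA andbC.
exact: cardsID.
Qed.

Lemma hole_propagates P p i (e : 'I_4) : cube_packing P -> odd e ->
  p \in holes P -> upd p i (p i - e)%R \notin holes P -> upd p i (p i + e)%R \in holes P.
Proof.
move=> HP oe hp /not_holesP[x xP px]; apply: contraT => /not_holesP[x' x'P px'].
(* Both covering cubes avoid [p], hence contain [p + 2 e_i] and coincide; but
   no segment contains both [p i - e] and [p i + e]. *)
have moved z v w : upd p i v \in cube z -> (upd p i w \in cube z) = seg (z i) w.
  by move=> pz; rewrite -(upd_upd p i v) (in_cube_upd _ _ pz).
have beyond z v : z \in P -> upd p i v \in cube z ->
    v = (p i - e)%R \/ v = (p i + e)%R -> upd p i (p i + 2)%R \in cube z.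
  move=> zP pz ve; rewrite (moved _ _ _ pz); apply: seg_across oe _ _.
    by rewrite -(moved _ _ _ pz) upd_id; apply/negP; apply: holes_uncovered hp zP.
  by case: ve => vE; rewrite -!(moved _ _ _ pz) -vE pz ?orbT.
have xx' : x = x' := packing_cube_uniq HP xP x'P
  (beyond _ _ xP px (or_introl erefl)) (beyond _ _ x'P px' (or_intror erefl)).
subst x'; have xm : seg (x i) (p i - e)%R by rewrite -(moved _ _ _ px) px.
by move: px'; rewrite (moved _ _ _ px) (negbTE (seg_odd_neighbours oe xm)).
Qed.

Lemma cube_upd_layer A x i u : seg (x i) u ->
  cube (upd x i u) :&: layer A i u = cube x :&: layer A i u.
Proof.
move=> xu; apply/setP => y; rewrite !inE.
case: (eqVneq (y i) u) => [yi|]; rewrite ?andbF //.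
congr (_ && _); apply: eq_forallb => k; rewrite ffunE.
by case: eqP => [->|//]; rewrite yi seg_refl xu.
Qed.

Lemma free_in_faces P A x i : free_in P A x =
  free_in P (layer A i (x i)) x && free_in P (layer A i (x i + 1)%R) (upd x i (x i + 1)%R).
Proof.
rewrite /free_in cube_upd_layer ?seg_succ // -subUset -setIUr.
suff -> : cube x :&: (layer A i (x i) :|: layer A i (x i + 1)%R) = cube x :&: A by [].
apply/setP => y; rewrite !inE; case yx: [forall k, _] => //=; rewrite -andb_orr.
by move/forallP/(_ i): yx; rewrite segE => ->; rewrite andbT.
Qed.

Section Layers.

Variables (P : {set rep d}) (S : {set 'I_d}) (a : rep d) (i : 'I_d).
Hypotheses (HP : cube_packing P) (iS : i \in S).

Local Notation A := (slice S a).
Local Notation L t := (layer (slice S a) i t).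

Lemma layer_upd y t : y \in A -> upd y i t \in L t.
Proof. by move=> yA; rewrite inE slice_upd // upd_same eqxx. Qed.

Lemma free_face_across_full_layer t e x : odd e -> L t :&: holes P = set0 ->
  x \in L (t + e)%R -> free_in P (L (t + e)%R) x ->
  free_in P (L (t + 2)%R) (upd x i (t + 2)%R).
Proof.
move=> oe full /setIdP[_ /eqP xi] free; apply/subsetP => y /setIP[yx /setIdP[yA /eqP yi]].
have hole_e : upd y i (t + e)%R \in holes P.
  by apply: (subsetP free); rewrite inE layer_upd // (upd_in_cube yx) // xi seg_refl.
have := hole_propagates (i := i) HP oe hole_e.
rewrite !upd_upd upd_same addrK -addrA add_odd_I4 // -yi upd_id; apply.
apply/negP => hole_t; suff : upd y i t \in L t :&: holes P by rewrite full inE.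
by rewrite inE hole_t layer_upd.
Qed.

Lemma free_cube_beside_full_layer t e x : odd e -> L t :&: holes P = set0 ->
  x \in L (t + e)%R -> free_in P (L (t + e)%R) x -> exists2 z, z \in A & free_in P A z.
Proof.
move=> oe full xL free; have far := free_face_across_full_layer oe full xL free.
have /setIdP[xA /eqP xi] := xL.
case: (odd_I4P oe) => ee; rewrite ee in xi free.
  by exists x => //; rewrite (free_in_faces _ _ _ i) xi free -addrA.
exists (upd x i (t + 2)%R); first exact: slice_upd.
have three : (2 + 1 = -1 :> 'I_4)%R by apply: val_inj.
have x_back : upd x i (t + -1)%R = x by rewrite -xi upd_id.
by rewrite (free_in_faces _ _ _ i) upd_same far upd_upd -addrA three x_back.
Qed.

Lemma deficient_layer_holes t w y j v : j \in S -> j != i ->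
  w \in L t -> L t :&: holes P = cube w :&: L t ->
  y \in A -> (forall k, k != i -> seg (w k) (y k)) ->
  (upd (upd y j v) i t \in holes P) = seg (w j) v.
Proof.
move=> jS ji /setIdP[_ /eqP wi] holes_w yA yw.
have qL : upd (upd y j v) i t \in L t by apply/layer_upd/slice_upd.
have -> : (upd (upd y j v) i t \in holes P) = (upd (upd y j v) i t \in cube w).
  by move/setP/(_ (upd (upd y j v) i t)): holes_w; rewrite !in_setI qL andbT.
apply/in_cubeP/idP => [/(_ j)|wv k]; first by rewrite upd_other // upd_same.
rewrite !ffunE; case: eqP => [->|/eqP ki]; first by rewrite wi seg_refl.
by case: eqP => [->//|_]; apply: yw.
Qed.

Lemma free_face_below_deficient_layers t x x' j : j \in S -> j != i -> x j != x' j ->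
  x \in L t -> L t :&: holes P = cube x :&: L t ->
  x' \in L (t + 1)%R -> L (t + 1)%R :&: holes P = cube x' :&: L (t + 1)%R ->
  free_in P (L (t - 1)%R) (upd x i (t - 1)%R).
Proof.
(* In the (i, j)-plane through a covered point [y] of the face, the holes of the
   layers [t] and [t + 1] are the segments [seg (x j)] and [seg (x' j)]; a
   column [v] of the cube [z] covering [y] on which they differ carries a hole
   in layer [t - 1] or [t + 2], both of which [z] covers. *)
move=> jS ji xx' xL holes_x x'L holes_x'.
apply/subsetP => y /setIP[yx /setIdP[yA /eqP yi]]; apply: contraT => /not_holesP[z zP yz].
have yx_off k : k != i -> seg (x k) (y k).
  by move=> ki; move/in_cubeP: yx => /(_ k); rewrite upd_other.
have holes_t v : (upd (upd y j v) i t \in holes P) = seg (x j) v.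
  exact: deficient_layer_holes jS ji xL holes_x yA yx_off.
have hole_t : upd y i t \in holes P by rewrite -[y in upd y](upd_id y j) holes_t yx_off.
have hole_t1 : upd y i (t + 1)%R \in holes P.
  have := hole_propagates (i := i) HP (isT : odd (1%R : 'I_4)) hole_t.
  rewrite !upd_upd upd_same -yi upd_id; apply; apply/not_holesP; by exists z.
have yx'_off k : k != i -> seg (x' k) (y k).
  move=> ki; have : upd y i (t + 1)%R \in cube x' :&: L (t + 1)%R.
    by rewrite -holes_x' in_setI hole_t1 layer_upd.
  by case/setIP => /in_cubeP/(_ k); rewrite upd_other.
have holes_t1 v : (upd (upd y j v) i (t + 1)%R \in holes P) = seg (x' j) v.
  exact: deficient_layer_holes jS ji x'L holes_x' yA yx'_off.
have zy : seg (z i) (t - 1)%R by rewrite -yi; move/in_cubeP: yz; apply.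
have zt : ~~ seg (z i) t.
  by rewrite -(in_cube_upd _ _ yz); apply/negP; apply: holes_uncovered hole_t zP.
have zt2 : seg (z i) (t + 2)%R.
  by apply: seg_across (isT : odd (1%R : 'I_4)) zt _; rewrite zy orbT.
have [v zv xv] := seg_separating_point xx' (yx_off j ji) (yx'_off j ji) (in_cubeP _ _ yz j).
have z_covers u : seg (z i) u -> upd (upd y j v) i u \notin holes P.
  move=> zu; apply/not_holesP; exists z => //; apply/in_cubeP => k; rewrite !ffunE.
  by case: eqP => [->//|_]; case: eqP => [->//|_]; move/in_cubeP: yz.
case xjv: (seg (x j) v) in xv.
  have hole : upd (upd y j v) i t \in holes P by rewrite holes_t xjv.
  have := hole_propagates (i := i) HP (isT : odd ((-1)%R : 'I_4)) hole.
  rewrite !upd_upd upd_same opprK (negbTE (z_covers _ zy)); apply.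
  by rewrite holes_t1; case: (seg (x' j) v) xv.
have hole : upd (upd y j v) i (t + 1)%R \in holes P.
  by rewrite holes_t1; case: (seg (x' j) v) xv.
have := hole_propagates (i := i) HP (isT : odd (1%R : 'I_4)) hole.
rewrite !upd_upd upd_same addrK -addrA add_odd_I4 // (negbTE (z_covers _ zt2)); apply.
by rewrite holes_t xjv.
Qed.

Lemma free_cube_between_deficient_layers t x x' :
  x \in L t -> L t :&: holes P = cube x :&: L t ->
  x' \in L (t + 1)%R -> L (t + 1)%R :&: holes P = cube x' :&: L (t + 1)%R ->
  exists2 z, z \in A & free_in P A z.
Proof.
move=> xL holes_x x'L holes_x'.
have /setIdP[xA /eqP xi] := xL; have /setIdP[x'A /eqP x'i] := x'L.
have free_x : free_in P (L t) x by rewrite /free_in -holes_x subsetIr.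
case: (boolP [forall (k | k != i), x k == x' k]).
  move=> /forall_inP same; exists x => //; rewrite (free_in_faces _ _ _ i) xi free_x /=.
  have -> : upd x i (t + 1)%R = x'.
    by apply/ffunP => k; rewrite ffunE; case: eqP => [->//|/eqP ki]; apply/eqP/same.
  by rewrite /free_in -holes_x' subsetIr.
move=> /forall_inPn[j ji xx'].
have jS : j \in S.
  apply: contraTT xx' => jS; rewrite !inE in xA x'A.
  by rewrite (eqP (forall_inP xA j _)) ?(eqP (forall_inP x'A j _)) ?inE ?eqxx.
have x_back : upd x i (t - 1 + 1)%R = x by rewrite subrK -xi upd_id.
exists (upd x i (t - 1)%R); first by apply: slice_upd.
rewrite (free_in_faces _ _ _ i) upd_same upd_upd x_back subrK free_x andbT.
exact: free_face_below_deficient_layers jS ji xx' xL holes_x x'L holes_x'.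
Qed.

End Layers.

Lemma exists_free_cube P S a : cube_packing P ->
  #|cubes_meeting P (slice S a)| < 2 ^ #|S| <= #|cubes_meeting P (slice S a)| + 3 ->
  exists2 x, x \in slice S a & free_in P (slice S a) x.
Proof.
move=> HP; move Hn : #|S| => n; elim: n S a Hn => [|n IH] S a cardS bounds.
  move: bounds; move/cards0_eq: cardS => ->; rewrite slice0 expn0 ltnS leqn0 cards_eq0.
  case/andP => /eqP none _; exists a; first exact: set11.
  apply/subsetP => y /setIP[_ /set1P ->]; apply: contraT => /not_holesP[x xP ax].
  suff : x \in cubes_meeting P [set a] by rewrite none inE.
  by rewrite inE xP; apply/set0Pn; exists a; rewrite inE ax set11.
have [i iS] : exists i, i \in S by apply/set0Pn; rewrite -card_gt0 cardS.
have cardSi : #|S :\ i| = n by move: cardS; rewrite (cardsD1 i) iS => -[].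
pose N t := #|cubes_meeting P (layer (slice S a) i t)|.
have IHt t : N t < 2 ^ n <= N t + 3 ->
    exists2 x, x \in layer (slice S a) i t & free_in P (layer (slice S a) i t) x.
  by rewrite /N slice_layer //; apply: IH.
have full t : N t = 2 ^ n -> layer (slice S a) i t :&: holes P = set0.
  by rewrite /N slice_layer // -cardSi; apply: slice_holes_full.
have deficient t x : N t + 1 = 2 ^ n -> x \in layer (slice S a) i t ->
    free_in P (layer (slice S a) i t) x ->
    layer (slice S a) i t :&: holes P = cube x :&: layer (slice S a) i t.
  by rewrite /N !slice_layer // -cardSi; apply: slice_holes_deficient.
have N_le t : N t <= 2 ^ n.
  by rewrite /N slice_layer // -cardSi; apply: card_cubes_meeting_le.
have N_sum t : N t + N (t + 2)%R = #|cubes_meeting P (slice S a)|.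
  exact: card_cubes_meeting_layers.
rewrite expnS in bounds.
have [[t [e [oe /full Lt /IHt[x xL fx]]]]|[t [def0 def1]]] :=
  layer_count_cases N_le N_sum bounds.
  exact: (free_cube_beside_full_layer HP iS oe Lt xL fx).
have /IHt[x xL fx] : N t < 2 ^ n <= N t + 3 by apply/andP; split; lia.
have /IHt[x' x'L fx'] : N (t + 1)%R < 2 ^ n <= N (t + 1)%R + 3 by apply/andP; split; lia.
apply: (free_cube_between_deficient_layers HP iS xL _ x'L).
  exact: deficient def0 xL fx.
exact: deficient def1 x'L fx'.
Qed.

Lemma free_cube_extends_packing P x : cube_packing P -> free_in P setT x ->
  x \notin P /\ cube_packing (x |: P).
Proof.
move=> HP; rewrite /free_in setIT => /subsetP free.
have disj w : w \in P -> [disjoint cube x & cube w].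
  move=> wP; rewrite disjoints_subset; apply/subsetP => y yx; rewrite inE.
  by apply/negP => yw; apply: holes_uncovered (free y yx) wP yw.
split.
  by apply/negP => xP; apply: holes_uncovered (free x (cube_refl x)) xP (cube_refl x).
move=> u w; rewrite !inE => /predU1P[->|uP] /predU1P[->|wP]; rewrite ?eqxx // => neq.
- by rewrite cubes_disjointE disj.
- by rewrite cubes_disjointE disjoint_sym disj.
- exact: HP.
Qed.

Lemma full_packing_tiling P : cube_packing P -> #|P| = 2 ^ d -> cube_tiling P.
Proof.
move=> HP card; split=> // y.
have := @slice_holes_full P setT y HP; rewrite sliceT cubes_meetingT cardsT card_ord setTI.
move=> /(_ card) no_holes; have : y \notin holes P by rewrite no_holes inE.
by case/not_holesP => x xP yx; exists x; rewrite // inE in yx.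
Qed.

Lemma packing_extends_to_tiling delta P : delta <= 3 -> cube_packing P ->
  #|P| + delta = 2 ^ d -> exists T, cube_tiling T /\ P \subset T.
Proof.
elim: delta P => [|delta IH] P le3 HP card.
  by exists P; split=> //; apply: full_packing_tiling; rewrite // -card addn0.
pose o : rep d := [ffun=> ord0].
have [x _] : exists2 x, x \in slice setT o & free_in P (slice setT o) x.
  apply: exists_free_cube; rewrite // sliceT cubes_meetingT cardsT card_ord.
  by apply/andP; split; lia.
rewrite sliceT => /(free_cube_extends_packing HP)[xP HP'].
have card' : #|x |: P| + delta = 2 ^ d by rewrite cardsU1 xP add1n addSnnS.
have [T [tiling sub]] := IH (x |: P) (ltnW le3) HP' card'.
by exists T; split=> //; apply: subset_trans sub; apply: subsetUr.
Qed.

End Cubes.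

Theorem theorem2 (d : nat) (delta : nat) :
  1 <= d -> 1 <= delta <= 3 ->
  forall P : {set rep d},
    cube_packing P -> #|P| + delta = 2 ^ d ->
    exists T : {set rep d}, cube_tiling T /\ P \subset T.
Proof. by move=> _ /andP[_ le3] P; apply: packing_extends_to_tiling. Qed.
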